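(* Let $\varphi:(0,1]\to[0,1]$ be an increasing submultiplicative function (i.e. $\varphi(xy)\le\varphi(x)\varphi(y)$ for $x,y\in(0,1]$) such that $\varphi(\lambda)<1$ for some $\lambda\in(0,1)$. Then there is a constant $C>0$ such that $$\varphi(x)\le \frac{C}{1+\log(1/x)}\qquad\text{for all }x\in(0,1].$$ *)

From Stdlib Require Import Reals.
Open Scope R_scope.

(** Submultiplicativity gives [phi (lam ^ k) <= q ^ k] with [q = phi lam < 1].
    A point [x] with [lam ^ (k+1) < x <= lam ^ k] has [ln (1/x) < (k+1) ln (1/lam)],
    while monotonicity gives [phi x <= q ^ k]; and [(k+1) q ^ k <= 1/(1-q)]
    because [q ^ k] is the smallest of the terms of [1 + q + ... + q ^ k]. *)

From Stdlib Require Import Reals.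
From Stdlib Require Import Lra Lia Psatz.
Open Scope R_scope.

Lemma pow_in_unit_interval (y : R) (k : nat) : 0 < y <= 1 -> 0 < y ^ k <= 1.
Proof.
  intros Hy; split.
  - apply pow_lt; lra.
  - rewrite <- (pow1 k); apply pow_incr; lra.
Qed.

Lemma pow_le_pow_of_le_1 (q : R) (j k : nat) :
  0 <= q <= 1 -> (j <= k)%nat -> q ^ k <= q ^ j.
Proof.
  intros Hq Hjk.
  replace k with (j + (k - j))%nat by lia; rewrite pow_add.
  assert (Hj : 0 <= q ^ j) by (apply pow_le; lra).
  assert (Hkj : q ^ (k - j) <= 1) by (rewrite <- (pow1 (k - j)); apply pow_incr; lra).
  nra.
Qed.

Lemma succ_mul_pow_le (q : R) (k : nat) : 0 <= q < 1 -> INR (S k) * q ^ k <= / (1 - q).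
Proof.
  intros Hq.
  assert (Hgeom : sum_f_R0 (fun j => q ^ j) k = (1 - q ^ S k) / (1 - q))
    by (apply tech3; lra).
  assert (Hsum : sum_f_R0 (fun _ => q ^ k) k <= sum_f_R0 (fun j => q ^ j) k).
  { apply sum_Rle; intros j Hj; apply pow_le_pow_of_le_1; [lra | exact Hj]. }
  rewrite sum_cte, Hgeom in Hsum.
  assert (Hpow : 0 <= q ^ S k) by (apply pow_le; lra).
  assert (Hinv : 0 < / (1 - q)) by (apply Rinv_0_lt_compat; lra).
  unfold Rdiv in Hsum; nra.
Qed.

Lemma pow_mul_affine_le (q L : R) (k : nat) :
  0 <= q < 1 -> 0 <= L -> q ^ k * (1 + INR (S k) * L) <= 1 + L / (1 - q).
Proof.
  intros Hq HL.
  assert (Hpow : q ^ k <= 1) by (rewrite <- (pow1 k); apply pow_incr; lra).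
  assert (Hlin := succ_mul_pow_le q k Hq).
  unfold Rdiv; nra.
Qed.

Lemma ln_inv_nonneg (x : R) : 0 < x <= 1 -> 0 <= ln (/ x).
Proof.
  intros Hx; rewrite ln_Rinv by lra.
  destruct (Req_dec x 1) as [-> | Hx1].
  - rewrite ln_1; lra.
  - assert (Hlt : ln x < ln 1) by (apply ln_increasing; lra).
    rewrite ln_1 in Hlt; lra.
Qed.

Lemma ln_inv_lt_of_pow_lt (lam x : R) (k : nat) :
  0 < lam -> lam ^ k < x -> ln (/ x) < INR k * ln (/ lam).
Proof.
  intros Hlam Hk.
  assert (Hpow : 0 < lam ^ k) by (apply pow_lt; lra).
  assert (Hln : ln (lam ^ k) < ln x) by (apply ln_increasing; lra).
  rewrite ln_pow in Hln by lra.
  rewrite !ln_Rinv by lra; nra.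
Qed.

Lemma pow_bracket (lam x : R) :
  0 < lam < 1 -> 0 < x <= 1 -> exists k, lam ^ S k < x <= lam ^ k.
Proof.
  intros Hlam Hx.
  destruct (pow_lt_1_zero lam ltac:(rewrite Rabs_pos_eq; lra) x (proj1 Hx)) as [N HN].
  specialize (HN N (le_n N)).
  rewrite Rabs_pos_eq in HN by (apply pow_le; lra).
  induction N as [|N IH].
  - simpl in HN; lra.
  - destruct (Rlt_or_le (lam ^ N) x) as [Hlt | Hle].
    + exact (IH Hlt).
    + exists N; split; assumption.
Qed.

Section SubmultiplicativeDecay.

Variable phi : R -> R.
Hypothesis phi_range : forall x, 0 < x <= 1 -> 0 <= phi x <= 1.
Hypothesis phi_mono :
  forall x y, 0 < x <= 1 -> 0 < y <= 1 -> x <= y -> phi x <= phi y.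
Hypothesis phi_submul :
  forall x y, 0 < x <= 1 -> 0 < y <= 1 -> phi (x * y) <= phi x * phi y.

Lemma phi_pow_le (y : R) (k : nat) : 0 < y <= 1 -> phi (y ^ k) <= phi y ^ k.
Proof.
  intros Hy; induction k as [|k IH]; simpl.
  - apply phi_range; lra.
  - assert (Hyk := pow_in_unit_interval y k Hy).
    assert (Hphiy := phi_range y Hy).
    assert (Hphiyk := phi_range (y ^ k) Hyk).
    apply Rle_trans with (phi y * phi (y ^ k)); [apply phi_submul; assumption |].
    apply Rmult_le_compat_l; lra.
Qed.

Lemma phi_mul_log_le (lam : R) :
  0 < lam < 1 -> phi lam < 1 ->
  forall x, 0 < x <= 1 -> phi x * (1 + ln (/ x)) <= 1 + ln (/ lam) / (1 - phi lam).
Proof.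
  intros Hlam Hq x Hx.
  destruct (pow_bracket lam x Hlam Hx) as [k [Hlo Hhi]].
  assert (HlamI : 0 < lam <= 1) by lra.
  assert (Hphi : phi x <= phi lam ^ k).
  { apply Rle_trans with (phi (lam ^ k)); [| exact (phi_pow_le lam k HlamI)].
    apply phi_mono; [exact Hx | apply pow_in_unit_interval; exact HlamI | exact Hhi]. }
  assert (Hlog := ln_inv_lt_of_pow_lt lam x (S k) (proj1 Hlam) Hlo).
  assert (Hbound := pow_mul_affine_le (phi lam) (ln (/ lam)) k
                      ltac:(pose proof (phi_range lam HlamI); lra) (ln_inv_nonneg lam HlamI)).
  assert (Hx0 := ln_inv_nonneg x Hx).
  assert (Hphix := phi_range x Hx).
  apply Rle_trans with (phi lam ^ k * (1 + INR (S k) * ln (/ lam))); [| exact Hbound].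
  apply Rmult_le_compat; lra.
Qed.

End SubmultiplicativeDecay.

Theorem lemma2p1 (phi : R -> R)
  (Hrange : forall x, 0 < x <= 1 -> 0 <= phi x <= 1)
  (Hmono : forall x y, 0 < x <= 1 -> 0 < y <= 1 -> x <= y -> phi x <= phi y)
  (Hsub : forall x y, 0 < x <= 1 -> 0 < y <= 1 -> phi (x * y) <= phi x * phi y)
  (Hlam : exists lam, 0 < lam < 1 /\ phi lam < 1) :
  exists C, 0 < C /\
    forall x, 0 < x <= 1 -> phi x <= C / (1 + ln (/ x)).
Proof.
  destruct Hlam as [lam [Hlam Hq]].
  exists (1 + ln (/ lam) / (1 - phi lam)); split.
  - assert (HL := ln_inv_nonneg lam ltac:(lra)).
    assert (0 <= ln (/ lam) / (1 - phi lam)) by (apply Rmult_le_pos; [lra | left; apply Rinv_0_lt_compat; lra]).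
    lra.
  - intros x Hx.
    assert (Hbound := phi_mul_log_le phi Hrange Hmono Hsub lam Hlam Hq x Hx).
    assert (Hden : 0 < 1 + ln (/ x)) by (pose proof (ln_inv_nonneg x Hx); lra).
    apply Rmult_le_reg_r with (1 + ln (/ x)); [exact Hden |].
    unfold Rdiv; rewrite Rmult_assoc, Rinv_l by lra; lra.
Qed.
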